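(* Assume Martin's Axiom ($\mathsf{MA}$). Let $\mathcal{A} \subseteq \mathbb{N}^{\mathbb{N}}$ be an almost disjoint family of functions with $|\mathcal{A}| < 2^{\aleph_0}$, and let $F \subseteq \mathbb{N}^{\mathbb{N}}$ be a family that is not finitely covered by $\mathcal{A}$ with $|F| < 2^{\aleph_0}$. Then there exists a function $g \in \mathbb{N}^{\mathbb{N}}$ with $g \notin \mathcal{A}$ such that (i) $\mathcal{A} \cup \{g\}$ is an almost disjoint family of functions, and (ii) for every $f \in F$ the set $\{n \in \mathbb{N} : f(n) = g(n)\}$ is infinite.
   Context: Functions $f \in \mathbb{N}^{\mathbb{N}}$ are identified with their graphs $\{(n,f(n)) : n\in\mathbb{N}\} \subseteq \mathbb{N}\times\mathbb{N}$. Two functions $g_0,g_1 \in \mathbb{N}^{\mathbb{N}}$ are almost disjoint if $\{n : g_0(n)=g_1(n)\}$ is finite; a family $\mathcal{A} \subseteq \mathbb{N}^{\mathbb{N}}$ is an almost disjoint family of functions if any two distinct members are almost disjoint. A function $f$ is finitely covered by $\mathcal{A}$ if there are $g_0,\dots,g_n \in \mathcal{A}$ such that $\{k : f(k) \notin \{g_0(k),\dots,g_n(k)\}\}$ is finite. A family $F$ is finitely covered by $\mathcal{A}$ if some $f \in F$ is finitely covered by $\mathcal{A}$ (so ''$F$ is not finitely covered by $\mathcal{A}$'' means no member of $F$ is finitely covered by $\mathcal{A}$). *)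

From Stdlib Require Import List Arith.
Import ListNotations.

Definition finite_nat (X : nat -> Prop) : Prop :=
  exists N, forall n, X n -> n < N.

Definition infinite_nat (X : nat -> Prop) : Prop := ~ finite_nat X.

(* Cardinality strictly below the continuum 2^aleph_0:
   there is no injection of 2^N into the set / type. *)
Definition card_lt_c {T : Type} (X : T -> Prop) : Prop :=
  ~ exists e : (nat -> bool) -> T,
      (forall x, X (e x)) /\ (forall x y, e x = e y -> x = y).

Definition type_card_lt_c (I : Type) : Prop := card_lt_c (fun _ : I => True).

Definition almost_disjoint (A : (nat -> nat) -> Prop) : Prop :=
  forall g0 g1, A g0 -> A g1 -> g0 <> g1 ->
    finite_nat (fun n => g0 n = g1 n).

Definition finitely_covered (f : nat -> nat) (A : (nat -> nat) -> Prop) : Prop :=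
  exists gs : list (nat -> nat), gs <> [] /\ (forall g, In g gs -> A g) /\
    finite_nat (fun k => forall g, In g gs -> f k <> g k).

Definition family_not_finitely_covered (F A : (nat -> nat) -> Prop) : Prop :=
  forall f, F f -> ~ finitely_covered f A.

Section Forcing.
Context {P : Type} (le : P -> P -> Prop).

Definition compatible (p q : P) : Prop := exists r, le r p /\ le r q.

Definition antichain (X : P -> Prop) : Prop :=
  forall p q, X p -> X q -> p <> q -> ~ compatible p q.

Definition countable_set (X : P -> Prop) : Prop :=
  exists c : P -> nat, forall p q, X p -> X q -> c p = c q -> p = q.

Definition ccc : Prop := forall X, antichain X -> countable_set X.

Definition dense (D : P -> Prop) : Prop := forall p, exists q, le q p /\ D q.

Definition filter (G : P -> Prop) : Prop :=
  (exists p, G p) /\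
  (forall p q, G p -> le p q -> G q) /\
  (forall p q, G p -> G q -> exists r, G r /\ le r p /\ le r q).

Definition is_preorder : Prop :=
  (forall p, le p p) /\ (forall p q r, le p q -> le q r -> le p r).
End Forcing.

Definition MartinsAxiom : Prop :=
  forall (P : Type) (le : P -> P -> Prop),
    inhabited P -> is_preorder le -> ccc le ->
    forall (I : Type) (D : I -> P -> Prop),
      type_card_lt_c I -> (forall i, dense le (D i)) ->
      exists G, filter le G /\ forall i, exists p, G p /\ D i p.

(* Force with finite approximations: a condition is a finite stem of
   g together with finitely many members of A that the rest of g promises to
   avoid.  Conditions with equal stems are compatible, so the forcing notion
   is ccc.  The requests "the stem reaches position k", "avoid h in A" and
   "agree with f in F beyond k" give fewer than 2^aleph_0 dense sets (a
   countable union of small sets is small); the last ones are dense because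
   f is not finitely covered.  MA yields a filter meeting them all, whose
   stems glue to g. *)

From Pilot Require Import Defs.
From Stdlib Require Import List Arith Lia Classical ClassicalEpsilon
  ProofIrrelevance FunctionalExtensionality Cantor.
Import ListNotations.

Lemma card_lt_c_inj {T U : Type} (X : T -> Prop) (Y : U -> Prop) (m : T -> U) :
  (forall t, X t -> Y (m t)) ->
  (forall s t, X s -> X t -> m s = m t -> s = t) ->
  card_lt_c Y -> card_lt_c X.
Proof.
  intros HXY Hinj HY [e [He Heinj]]. apply HY.
  exists (fun x => m (e x)). split.
  - intro x. apply HXY, He.
  - intros x y Hxy. apply Heinj, Hinj; auto.
Qed.

Lemma card_lt_c_subset {T : Type} (X Y : T -> Prop) :
  (forall t, X t -> Y t) -> card_lt_c Y -> card_lt_c X.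
Proof. intro HXY. apply (card_lt_c_inj X Y (fun t => t)); auto. Qed.

Lemma card_lt_c_subsingleton {T : Type} (X : T -> Prop) :
  (forall s t, X s -> X t -> s = t) -> card_lt_c X.
Proof.
  intros HX [e [He Heinj]].
  assert (Heq : (fun _ : nat => true) = (fun _ => false))
    by (apply Heinj, HX; apply He).
  discriminate (f_equal (fun x => x 0) Heq).
Qed.

(* 2^N is in bijection with its countable power (2^N)^N, via Cantor pairing. *)
Definition flatten_seq (y : nat -> nat -> bool) : nat -> bool :=
  fun n => y (fst (of_nat n)) (snd (of_nat n)).

Lemma flatten_seq_inj (y z : nat -> nat -> bool) :
  flatten_seq y = flatten_seq z -> y = z.
Proof.
  intro H. extensionality a. extensionality b.
  pose proof (f_equal (fun u => u (to_nat (a, b))) H) as Hab.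
  unfold flatten_seq in Hab. rewrite cancel_of_to in Hab. exact Hab.
Qed.

(* A countable union of small sets is small (a diagonal argument: the
   continuum has uncountable cofinality).  Given an injection of 2^N into
   the union, view its domain as (2^N)^N; the k-th coordinate of points
   sent into X k cannot cover 2^N, so a sequence of missed coordinates
   yields a point that is sent into no X k. *)
Lemma card_lt_c_countable_union {T : Type} (X : nat -> T -> Prop) :
  (forall k, card_lt_c (X k)) -> card_lt_c (fun t => exists k, X k t).
Proof.
  intros HX [e [He Heinj]].
  set (e' := fun y => e (flatten_seq y)).
  assert (e'_inj : forall y z, e' y = e' z -> y = z)
    by (intros y z H; apply flatten_seq_inj, Heinj, H).
  assert (Hmiss : forall k, exists x : nat -> bool,
             forall y, X k (e' y) -> y k <> x).
  { intro k. apply NNPP. intro Hcover.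
    assert (Hhit : forall x, exists y, X k (e' y) /\ y k = x).
    { intro x. apply NNPP. intro Hno. apply Hcover. exists x.
      intros y Hy Hyx. apply Hno. exists y. auto. }
    destruct (choice _ Hhit) as [r Hr].
    apply (HX k). exists (fun x => e' (r x)). split.
    - intro x. apply (Hr x).
    - intros x x' Hxx'. apply e'_inj in Hxx'.
      rewrite <- (proj2 (Hr x)), <- (proj2 (Hr x')), Hxx'. reflexivity. }
  destruct (choice _ Hmiss) as [y Hy].
  destruct (He (flatten_seq y)) as [k Hk].
  exact (Hy k y Hk eq_refl).
Qed.

Lemma card_lt_c_union {T : Type} (X Y : T -> Prop) :
  card_lt_c X -> card_lt_c Y -> card_lt_c (fun t => X t \/ Y t).
Proof.
  intros HX HY.
  apply (card_lt_c_subset _ (fun t => exists k, match k with 0 => X t | S _ => Y t end)).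
  - intros t [Ht|Ht]; [exists 0 | exists 1]; exact Ht.
  - apply card_lt_c_countable_union. intros [|k]; assumption.
Qed.

Lemma card_lt_c_nat : card_lt_c (fun _ : nat => True).
Proof.
  apply (card_lt_c_subset _ (fun n => exists k, n = k)); [eauto|].
  apply card_lt_c_countable_union. intro k.
  apply card_lt_c_subsingleton. congruence.
Qed.

Lemma card_lt_c_nat_prod {U : Type} (Y : U -> Prop) :
  card_lt_c Y -> card_lt_c (fun p : nat * U => Y (snd p)).
Proof.
  intro HY.
  apply (card_lt_c_subset _ (fun p => exists k, fst p = k /\ Y (snd p))); [eauto|].
  apply card_lt_c_countable_union. intro k.
  apply (card_lt_c_inj _ Y snd); [tauto| |exact HY].
  intros [a u] [b v] [Ha _] [Hb _] Huv; simpl in *; congruence.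
Qed.

Lemma card_lt_c_sig {T : Type} (X : T -> Prop) :
  card_lt_c X -> type_card_lt_c {t | X t}.
Proof.
  intro HX. apply (card_lt_c_inj _ X (@proj1_sig _ _)).
  - intros t _. apply proj2_sig.
  - intros [s Hs] [t Ht] _ _ Hst. apply subset_eq_compat, Hst.
  - exact HX.
Qed.

Inductive request : Type :=
  | Grow (k : nat)
  | Avoid (h : nat -> nat)
  | Meet (k : nat) (f : nat -> nat).

Definition admissible (A F : (nat -> nat) -> Prop) (r : request) : Prop :=
  match r with
  | Grow _ => True
  | Avoid h => A h
  | Meet _ f => F f
  end.

Lemma admissible_small (A F : (nat -> nat) -> Prop) :
  card_lt_c A -> card_lt_c F -> card_lt_c (admissible A F).
Proof.
  intros HA HF.
  set (grows := fun r => exists k, r = Grow k).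
  set (avoids := fun r => exists h, r = Avoid h /\ A h).
  set (meets := fun r => exists k f, r = Meet k f /\ F f).
  apply (card_lt_c_subset _ (fun r => grows r \/ avoids r \/ meets r)).
  { intros [k|h|k f] Hr; unfold grows, avoids, meets; eauto 6. }
  repeat apply card_lt_c_union.
  - apply (card_lt_c_inj _ (fun _ : nat => True) (fun r => match r with Grow k => k | _ => 0 end));
      [auto | | exact card_lt_c_nat].
    intros r r' [k ->] [k' ->]. congruence.
  - apply (card_lt_c_inj _ A (fun r => match r with Avoid h => h | _ => fun _ => 0 end));
      [intros r [h [-> Hh]]; exact Hh | | exact HA].
    intros r r' [h [-> _]] [h' [-> _]]. congruence.
  - apply (card_lt_c_inj _ (fun p : nat * (nat -> nat) => F (snd p))
             (fun r => match r with Meet k f => (k, f) | _ => (0, fun _ => 0) end));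
      [intros r [k [f [-> Hf]]]; exact Hf | | exact (card_lt_c_nat_prod F HF)].
    intros r r' [k [f [-> _]]] [k' [f' [-> _]]]. congruence.
Qed.

Fixpoint code_list (l : list nat) : nat :=
  match l with
  | [] => 0
  | x :: l' => S (to_nat (x, code_list l'))
  end.

Lemma code_list_inj (l l' : list nat) : code_list l = code_list l' -> l = l'.
Proof.
  revert l'; induction l as [|x l IH]; intros [|y l'] H; cbn [code_list] in H;
    try discriminate; auto.
  apply eq_add_S, (f_equal of_nat) in H.
  rewrite !cancel_of_to in H. injection H as -> Hl. f_equal. auto.
Qed.

Definition fresh (E : list (nat -> nat)) (n : nat) : nat :=
  S (list_max (map (fun h => h n) E)).

Lemma fresh_neq (E : list (nat -> nat)) (n : nat) (h : nat -> nat) :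
  In h E -> fresh E n <> h n.
Proof.
  intros Hh. unfold fresh.
  assert (Hle : h n <= list_max (map (fun h => h n) E)).
  { pose proof (proj1 (list_max_le (map (fun h => h n) E) _) (le_n _)) as Hall.
    rewrite Forall_forall in Hall. apply Hall, (in_map (fun g => g n)), Hh. }
  lia.
Qed.

Definition extend (s : list nat) (v : nat -> nat) (m : nat) : list nat :=
  s ++ map v (seq (length s) (m - length s)).

Lemma extend_length (s : list nat) (v : nat -> nat) (m : nat) :
  length (extend s v m) = length s + (m - length s).
Proof. unfold extend. rewrite length_app, length_map, length_seq. reflexivity. Qed.

Lemma extend_nth_new (s : list nat) (v : nat -> nat) (m n : nat) :
  length s <= n < m -> nth n (extend s v m) 0 = v n.
Proof.
  intro Hn. unfold extend. rewrite app_nth2 by lia.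
  rewrite nth_indep with (d' := v 0) by (rewrite length_map, length_seq; lia).
  rewrite map_nth, seq_nth by lia. f_equal. lia.
Qed.

Lemma uncovered_escapes (A : (nat -> nat) -> Prop) (f : nat -> nat)
    (E : list (nat -> nat)) (m : nat) :
  ~ finitely_covered f A -> (forall h, In h E -> A h) ->
  exists n, m <= n /\ forall h, In h E -> f n <> h n.
Proof.
  intros Hf HE. apply NNPP. intro Hno.
  destruct E as [|h0 E'].
  - apply Hno. exists m. split; [lia | intros h []].
  - apply Hf. exists (h0 :: E'). split; [discriminate | split; [exact HE|]].
    exists m. intros n Hcov. apply NNPP. intro Hn. apply Hno.
    exists n. split; [lia | exact Hcov].
Qed.

Section Conditions.
Variable A : (nat -> nat) -> Prop.

Record condition : Type := Condition {
  stem : list nat;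
  promises : list (nat -> nat);
  promises_in_A : forall h, In h promises -> A h }.

Definition extends (q p : condition) : Prop :=
  (exists t, stem q = stem p ++ t) /\
  incl (promises p) (promises q) /\
  forall n h, length (stem p) <= n < length (stem q) -> In h (promises p) ->
    nth n (stem q) 0 <> h n.

Lemma extends_preorder : is_preorder extends.
Proof.
  split.
  - intro p. split; [exists []; rewrite app_nil_r; reflexivity|].
    split; [apply incl_refl | intros; lia].
  - intros r q p [[t1 H1] [I1 N1]] [[t2 H2] [I2 N2]]. split; [|split].
    + exists (t2 ++ t1). rewrite H1, H2, app_assoc. reflexivity.
    + eapply incl_tran; eauto.
    + intros n h Hn Hh.
      destruct (Nat.lt_ge_cases n (length (stem q))) as [Hl|Hl].
      * rewrite H1, app_nth1 by exact Hl. apply N2; auto; lia.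
      * apply N1; [lia | apply I2, Hh].
Qed.

Lemma extends_length (q p : condition) :
  extends q p -> length (stem p) <= length (stem q).
Proof. intros [[t H] _]. rewrite H, length_app. lia. Qed.

Lemma extends_nth (q p : condition) (n : nat) :
  extends q p -> n < length (stem p) -> nth n (stem q) 0 = nth n (stem p) 0.
Proof. intros [[t H] _] Hn. rewrite H, app_nth1 by exact Hn. reflexivity. Qed.

(* Two conditions with the same stem are compatible (pool the promises);
   as there are countably many stems, the forcing notion is ccc. *)
Lemma extends_ccc : ccc extends.
Proof.
  intros X HX. exists (fun p => code_list (stem p)).
  intros p q Hp Hq Hcode. apply code_list_inj in Hcode.
  apply NNPP. intro Hne. apply (HX p q Hp Hq Hne).
  assert (Hpool : forall h, In h (promises p ++ promises q) -> A h).
  { intros h Hh. apply in_app_or in Hh as [Hh|Hh];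
      [apply (promises_in_A p) | apply (promises_in_A q)]; exact Hh. }
  exists (Condition (stem p) _ Hpool). cbn.
  split; split; cbn.
  - exists []. rewrite app_nil_r. reflexivity.
  - split; [apply incl_appl, incl_refl | intros; lia].
  - exists []. rewrite app_nil_r. exact Hcode.
  - split; [apply incl_appr, incl_refl|]. intros n h Hn. rewrite Hcode in Hn. lia.
Qed.

Lemma add_promise (p : condition) (h : nat -> nat) :
  A h -> exists q, extends q p /\ In h (promises q).
Proof.
  intro Hh.
  assert (Hq : forall g, In g (h :: promises p) -> A g).
  { intros g [<-|Hg]; [exact Hh | exact (promises_in_A p g Hg)]. }
  exists (Condition (stem p) _ Hq). split; [|left; reflexivity].
  split; cbn; [exists []; rewrite app_nil_r; reflexivity|].
  split; [intros g Hg; right; exact Hg | intros; lia].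
Qed.

Lemma grow_stem (p : condition) (v : nat -> nat) (m : nat) :
  (forall n h, length (stem p) <= n < m -> In h (promises p) -> v n <> h n) ->
  exists q, extends q p /\ stem q = extend (stem p) v m.
Proof.
  intro Hv. exists (Condition (extend (stem p) v m) _ (promises_in_A p)).
  split; [|reflexivity]. split; [|split]; cbn.
  - unfold extend. eexists. reflexivity.
  - apply incl_refl.
  - intros n h Hn Hh. rewrite extend_length in Hn.
    rewrite extend_nth_new by lia. apply Hv; auto. lia.
Qed.

End Conditions.

Definition request_met (A : (nat -> nat) -> Prop) (r : request)
    (q : condition A) : Prop :=
  match r with
  | Grow k => k < length (stem A q)
  | Avoid h => In h (promises A q)
  | Meet k f => exists n, k <= n < length (stem A q) /\ nth n (stem A q) 0 = f n
  end.

(* Every admissible request can be met below any condition; for Meet this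
   is exactly where F not being finitely covered by A is used. *)
Lemma request_met_dense (A F : (nat -> nat) -> Prop) (r : request) :
  family_not_finitely_covered F A -> admissible A F r ->
  dense (extends A) (request_met A r).
Proof.
  intros HF Hr p. destruct r as [k|h|k f]; cbn in Hr |- *.
  - destruct (grow_stem A p (fresh (promises A p)) (S k)) as [q [Hqp Hq]].
    { intros n h _ Hh. apply fresh_neq, Hh. }
    exists q. split; [exact Hqp|]. rewrite Hq, extend_length. lia.
  - exact (add_promise A p h Hr).
  - destruct (uncovered_escapes A f (promises A p) (max k (length (stem A p)))
                (HF f Hr) (promises_in_A A p)) as [n [Hn Hfn]].
    set (v := fun j => if j =? n then f n else fresh (promises A p) j).
    destruct (grow_stem A p v (S n)) as [q [Hqp Hq]].
    { intros j h _ Hh. unfold v. destruct (Nat.eqb_spec j n) as [->|_].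
      - exact (Hfn h Hh).
      - apply fresh_neq, Hh. }
    exists q. split; [exact Hqp|]. exists n.
    rewrite Hq, extend_length, extend_nth_new by lia.
    unfold v. rewrite Nat.eqb_refl. split; [lia | reflexivity].
Qed.

Section GenericFunction.
Variables (A : (nat -> nat) -> Prop) (G : condition A -> Prop).
Hypothesis G_filter : Defs.filter (extends A) G.
Hypothesis G_grows : forall k, exists p, G p /\ request_met A (Grow k) p.

Lemma generic_stems_agree (p q : condition A) (n : nat) :
  G p -> G q -> n < length (stem A p) -> n < length (stem A q) ->
  nth n (stem A p) 0 = nth n (stem A q) 0.
Proof.
  intros Gp Gq Hp Hq. destruct G_filter as [_ [_ Gdir]].
  destruct (Gdir p q Gp Gq) as [r [_ [Hrp Hrq]]].
  rewrite <- (extends_nth A r p n Hrp Hp), <- (extends_nth A r q n Hrq Hq).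
  reflexivity.
Qed.

Lemma generic_function_exists :
  exists g : nat -> nat,
    forall p n, G p -> n < length (stem A p) -> g n = nth n (stem A p) 0.
Proof.
  destruct (choice _ G_grows) as [pick Hpick].
  exists (fun n => nth n (stem A (pick n)) 0).
  intros p n Gp Hn. apply generic_stems_agree; try apply Hpick; assumption.
Qed.

Variable g : nat -> nat.
Hypothesis g_follows_stems :
  forall p n, G p -> n < length (stem A p) -> g n = nth n (stem A p) 0.

Lemma generic_keeps_promises (p : condition A) (h : nat -> nat) (n : nat) :
  G p -> In h (promises A p) -> length (stem A p) <= n -> g n <> h n.
Proof.
  intros Gp Hh Hn. destruct G_filter as [_ [_ Gdir]].
  destruct (G_grows n) as [q [Gq Hq]].
  destruct (Gdir p q Gp Gq) as [r [Gr [Hrp Hrq]]].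
  pose proof (extends_length A r q Hrq) as Hlen. cbn in Hq.
  rewrite (g_follows_stems r n Gr) by lia.
  destruct Hrp as [_ [_ Hnew]]. apply Hnew; [lia | exact Hh].
Qed.

Lemma generic_avoids (h : nat -> nat) :
  (exists p, G p /\ In h (promises A p)) -> finite_nat (fun n => g n = h n).
Proof.
  intros [p [Gp Hh]]. exists (length (stem A p)). intros n Hn.
  destruct (Nat.lt_ge_cases n (length (stem A p))) as [Hlt|Hge]; [exact Hlt|].
  contradiction (generic_keeps_promises p h n Gp Hh Hge Hn).
Qed.

Lemma generic_meets (f : nat -> nat) :
  (forall k, exists p, G p /\ request_met A (Meet k f) p) ->
  infinite_nat (fun n => f n = g n).
Proof.
  intros Hmeet [N HN].
  destruct (Hmeet N) as [p [Gp [n [Hn Hfn]]]].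
  assert (Hagree : f n = g n) by (rewrite (g_follows_stems p n Gp) by lia; auto).
  specialize (HN n Hagree). lia.
Qed.

End GenericFunction.

Lemma MA_generic_function (A F : (nat -> nat) -> Prop) :
  MartinsAxiom -> card_lt_c A -> family_not_finitely_covered F A ->
  card_lt_c F ->
  exists g : nat -> nat,
    (forall h, A h -> finite_nat (fun n => g n = h n)) /\
    (forall f, F f -> infinite_nat (fun n => f n = g n)).
Proof.
  intros MA HA HFc HF.
  assert (Hinh : inhabited (condition A))
    by (constructor; exact (Condition A [] [] (fun h Hh => match Hh with end))).
  destruct (MA (condition A) (extends A) Hinh (extends_preorder A) (extends_ccc A)
              {r | admissible A F r} (fun r => request_met A (proj1_sig r))
              (card_lt_c_sig _ (admissible_small A F HA HF))
              (fun r => request_met_dense A F _ HFc (proj2_sig r)))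
    as [G [G_filter Gmeets]].
  assert (Hmet : forall r, admissible A F r -> exists p, G p /\ request_met A r p)
    by (intros r Hr; exact (Gmeets (exist _ r Hr))).
  assert (G_grows : forall k, exists p, G p /\ request_met A (Grow k) p)
    by (intro k; apply Hmet; exact I).
  destruct (generic_function_exists A G G_filter G_grows) as [g Hg].
  exists g. split.
  - intros h Hh. exact (generic_avoids A G G_filter G_grows g Hg h (Hmet (Avoid h) Hh)).
  - intros f Hf. apply (generic_meets A G g Hg f).
    intro k. exact (Hmet (Meet k f) Hf).
Qed.

Lemma adjoin_almost_disjoint (A : (nat -> nat) -> Prop) (g : nat -> nat) :
  almost_disjoint A -> (forall h, A h -> finite_nat (fun n => g n = h n)) ->
  ~ A g /\ almost_disjoint (fun h => A h \/ h = g).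
Proof.
  intros HAD Hg. split.
  - intro HAg. destruct (Hg g HAg) as [N HN]. specialize (HN N eq_refl). lia.
  - intros g0 g1 [H0|<-] [H1|<-] Hne.
    + exact (HAD g0 g1 H0 H1 Hne).
    + destruct (Hg g0 H0) as [N HN]. exists N. intros n Hn. apply HN. auto.
    + exact (Hg g1 H1).
    + contradiction (Hne eq_refl).
Qed.

Theorem mainTheorem1 :
  MartinsAxiom ->
  forall (A F : (nat -> nat) -> Prop),
    almost_disjoint A -> card_lt_c A ->
    family_not_finitely_covered F A -> card_lt_c F ->
    exists g : nat -> nat,
      ~ A g /\
      almost_disjoint (fun h => A h \/ h = g) /\
      (forall f, F f -> infinite_nat (fun n => f n = g n)).
Proof.
  intros MA A F HAD HA HFc HF.
  destruct (MA_generic_function A F MA HA HFc HF) as [g [Havoid Hmeet]].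
  destruct (adjoin_almost_disjoint A g HAD Havoid) as [HnotA HAD'].
  exists g. auto.
Qed.
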